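(* Let $H$ be a finite, connected, $d$-regular graph on $[n]$ containing a clique on vertices $v_0,v_1,\dots,v_\ell$ ($1\le\ell\le d$). Then for $0\le k\le \ell-1$: (i) $\Phi_{\ell-1,k}(x_{v_0},\dots,x_{v_k};x_{v_{k+1}},\dots,x_{v_\ell})\in\mathbb{I}(U(H))$; (ii) $\Phi_{\ell-1,k}(x_0,\dots,x_k;x_{k+1},\dots,x_\ell)$ is symmetric in the second set of variables $x_{k+1},\dots,x_\ell$; (iii) its total degree in $x_0,\dots,x_\ell$ is $2d-\ell+1-k$.
   Context: Let $\overline{a}=(a_{ij})_{0\le j\le i\le d}$ be $m=(d+1)(d+2)/2$ indeterminates, $a_{ji}=a_{ij}$, and $\Phi(x,y)=\sum_{i,j=0}^d a_{ij}x^iy^j$. Define $\Phi_0(x_0;x_1)=\Phi(x_0,x_1)$ and, for $\ell\ge2$, $\Phi_{\ell-1}(x_0;x_1,\dots,x_\ell)=\dfrac{\Phi_{\ell-2}(x_0;x_1,\dots,x_{\ell-1})-\Phi_{\ell-2}(x_0;x_1,\dots,x_{\ell-2},x_\ell)}{x_\ell-x_{\ell-1}}$. Then set $\Phi_{\ell-1,0}(x_0;x_1,\dots,x_\ell)=\Phi_{\ell-1}(x_0;x_1,\dots,x_\ell)$ and, for $k\ge1$, $\Phi_{\ell-1,k}(x_0,\dots,x_k;x_{k+1},\dots,x_\ell)=\big(\Phi_{\ell-1,k-1}(x_0,\dots,x_{k-2},x_k;x_{k-1},x_{k+1},\dots,x_\ell)-\Phi_{\ell-1,k-1}(x_0,\dots,x_{k-1};x_k,\dots,x_\ell)\big)/(x_{k-1}-x_k)$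 (a polynomial). With $E$ the edge set of $H$: $S(H)=\{\Phi(x_i,x_j):ij\in E\}\subseteq\mathbb{C}[\overline{a},x_1,\dots,x_n]$, $W(H)=\mathbb{V}(S(H))\subseteq\mathbb{C}^{m+n}$, $Z(H)=W(H)\cap\bigcup_{i>j}\mathbb{V}(x_i-x_j)$, $U(H)=\overline{W(H)\setminus Z(H)}$ (Zariski closure), and $\mathbb{I}(U(H))$ is its vanishing ideal. *)

From HB Require Import structures.
From mathcomp Require Import all_boot all_order all_algebra.
From mathcomp Require Import fingroup perm Rstruct complex mpoly.
From Stdlib Require Rdefinitions ClassicalEpsilon.


Import GRing.Theory.
Local Open Scope ring_scope.

Definition CC : closedFieldType := complex Rdefinitions.R.

(* Number m = (d+1)(d+2)/2 of the indeterminates a_ij, 0 <= j <= i <= d. *)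
Definition mA (d : nat) : nat := (d.+1 * d.+2)./2.

(* Index of a_ij (= a_ji) among 0, ..., mA d - 1 (triangular numbering). *)
Definition triIdx (i j : nat) : nat :=
  ((maxn i j * (maxn i j).+1)./2 + minn i j)%N.

(* The t-th variable of {mpoly CC[N]} (0 if t >= N, never used below). *)
Definition Xn (N t : nat) : {mpoly CC[N]} :=
  if insub t is Some i then 'X_i else 0.

(* In all uses below q is a nonzero difference of two distinct variables
   of a polynomial ring (a non-zero-divisor), and the division is exact. *)
Definition exdiv {P : nzRingType} (p q : P) : P :=
  ClassicalEpsilon.epsilon (inhabits 0) (fun r => p = q * r).

Section PhiDefs.
Context {P : comNzRingType}.
Variables (d : nat) (a : nat -> nat -> P).

Definition Phi0 (t0 t1 : P) : P :=
  \sum_(i < d.+1) \sum_(j < d.+1) a i j * t0 ^+ i * t1 ^+ j.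

(* PhiL j s = Phi_j(s_0; s_1, ..., s_{j+1}) *)
Fixpoint PhiL (j : nat) (s : seq P) : P :=
  match j with
  | 0 => Phi0 s`_0 s`_1
  | j'.+1 =>
      exdiv (PhiL j' (take j'.+2 s) - PhiL j' (rcons (take j'.+1 s) s`_j'.+2))
            (s`_j'.+2 - s`_j'.+1)
  end.

Definition swapNth (s : seq P) (i j : nat) : seq P :=
  set_nth 0 (set_nth 0 s i s`_j) j s`_i.

(* PhiLk L k s = Phi_{L,k}(s_0, ..., s_k; s_{k+1}, ..., s_{L+1}) *)
Fixpoint PhiLk (L k : nat) (s : seq P) : P :=
  match k with
  | 0 => PhiL L s
  | k'.+1 =>
      exdiv (PhiLk L k' (swapNth s k' k'.+1) - PhiLk L k' s)
            (s`_k' - s`_k'.+1)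
  end.
End PhiDefs.

(* vertices of H are 'I_n (i.e. [n] numbered from 0) *)

Definition avar (d n : nat) (i j : nat) : {mpoly CC[mA d + n]} :=
  Xn (mA d + n) (triIdx i j).

Definition xvar (d n : nat) (v : 'I_n) : {mpoly CC[mA d + n]} :=
  Xn (mA d + n) (mA d + v).

Definition Phi (d n : nat) (t0 t1 : {mpoly CC[mA d + n]}) :=
  Phi0 d (avar d n) t0 t1.

Definition point (N : nat) := 'I_N -> CC.

Definition Wset (d n : nat) (e : rel 'I_n) : point (mA d + n) -> Prop :=
  fun z => forall u v, e u v -> (Phi d n (xvar d n u) (xvar d n v)).@[z] = 0.

Definition Zset (d n : nat) (e : rel 'I_n) : point (mA d + n) -> Prop :=
  fun z => Wset d n e z /\
    exists i j : 'I_n, (j < i)%N /\ (xvar d n i - xvar d n j).@[z] = 0.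

Definition vanI {N : nat} (S : point N -> Prop) : {mpoly CC[N]} -> Prop :=
  fun p => forall z, S z -> p.@[z] = 0.
Definition zeroV {N : nat} (I : {mpoly CC[N]} -> Prop) : point N -> Prop :=
  fun z => forall p, I p -> p.@[z] = 0.

Definition zclosure {N : nat} (S : point N -> Prop) : point N -> Prop :=
  zeroV (vanI S).

Definition Uset (d n : nat) (e : rel 'I_n) : point (mA d + n) -> Prop :=
  zclosure (fun z => Wset d n e z /\ ~ Zset d n e z).

Definition gvar (d l : nat) (i : nat) : {mpoly CC[mA d + l.+1]} :=
  Xn (mA d + l.+1) (mA d + i).

Definition PhiGen (d l k : nat) : {mpoly CC[mA d + l.+1]} :=
  PhiLk d (fun i j => Xn (mA d + l.+1) (triIdx i j)) l.-1 k
        [seq gvar d l i | i <- iota 0 l.+1].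

Definition renameX (d l : nat) (sigma : 'S_l.+1) :
    (mA d + l.+1).-tuple {mpoly CC[mA d + l.+1]} :=
  [tuple (if (t < mA d)%N then Xn (mA d + l.+1) t
          else gvar d l (sigma (inord (t - mA d)))) | t < mA d + l.+1].

Definition xdeg (d l : nat) (p : {mpoly CC[mA d + l.+1]}) : nat :=
  \max_(mo <- msupp p)
     \sum_(t < mA d + l.+1 | (mA d <= t)%N) mo t.

Definition simple_graph {n : nat} (e : rel 'I_n) : Prop :=
  ssrbool.symmetric e /\ irreflexive e.
Definition connected_graph {n : nat} (e : rel 'I_n) : Prop :=
  forall u v, connect e u v.
Definition regular_graph {n : nat} (e : rel 'I_n) (d : nat) : Prop :=
  forall v, #|[set u | e v u]| = d.

From HB Require Import structures.
From mathcomp Require Import all_boot all_order all_algebra.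
From mathcomp Require Import fingroup perm Rstruct complex mpoly.
From mathcomp Require Import ring zify.
From Stdlib Require ClassicalEpsilon.

(* Iterating the divided differences on the monomials t0^i t1^j gives the closed form
     Phi_{m,k}(s_0..s_k; s_{k+1}..s_{m+1}) = sum_{i,j <= d} a_ij (-1)^(m+k)
        (h_{j-m}(s_0..s_{m+1}) h_{i-k}(s_0..s_k) - h_{j-m-1}(s_0..s_{m+1}) h_{i-k+1}(s_0..s_k)),
   h_r being the complete homogeneous symmetric polynomials; it satisfies the defining
   recursions, whose exact quotients are unique in an integral domain.  Symmetry in
   s_{k+1}, ..., s_{m+1} (m = l - 1) is then visible, and every term has x-degree at most
   2d - m - k, with equality for the a_dd term, which is nonzero because
   h_r(1, 1, 0, ..., 0) = r + 1.  Membership in I(U(H)) uses only the recursions: at a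
   point of W(H) \ Z(H) the values of x_{v_0}, ..., x_{v_l} are distinct and Phi vanishes
   on each pair of them, so every divided difference vanishes there, hence also on the
   Zariski closure. *)

Set Implicit Arguments.
Unset Strict Implicit.
Unset Printing Implicit Defensive.

Import GRing.Theory Num.Theory.
Local Open Scope ring_scope.

Section CompleteHomogeneous.
Context {R : comNzRingType}.
Implicit Types (x y : R) (s t : seq R).

Fixpoint hsym (r : nat) s : R :=
  if s is x :: s' then \sum_(t < r.+1) x ^+ t * hsym (r - t) s' else (r == 0)%:R.

Lemma hsym_nil r : hsym r [::] = (r == 0)%:R.
Proof. by []. Qed.

Lemma hsym_cons x s r : hsym r (x :: s) = \sum_(t < r.+1) x ^+ t * hsym (r - t) s.
Proof. by []. Qed.

#[global] Arguments hsym : simpl never.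

Lemma hsym0 s : hsym 0 s = 1.
Proof. by elim: s => [|x s IHs] //; rewrite hsym_cons big_ord1 mul1r subn0. Qed.

Lemma hsym1s x r : hsym r [:: x] = x ^+ r.
Proof.
rewrite hsym_cons (bigD1 ord_max) //= hsym_nil subnn mulr1 big1 ?addr0 // => t ne_tr.
rewrite hsym_nil subn_eq0 leqNgt (_ : (t < r)%N) ?mulr0 //.
by move: ne_tr (ltn_ord t); rewrite -val_eqE /=; lia.
Qed.

Lemma hsymS x s r : hsym r.+1 (x :: s) = hsym r.+1 s + x * hsym r (x :: s).
Proof.
rewrite !hsym_cons big_ord_recl /= mul1r subn0 big_distrr.
by congr (_ + _); apply: eq_bigr => t _; rewrite /bump /= add1n subSS exprS -mulrA.
Qed.

Lemma hsym_cons_congr s t :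
  (forall r, hsym r s = hsym r t) -> forall x r, hsym r (x :: s) = hsym r (x :: t).
Proof. by move=> eq_st x r; rewrite !hsym_cons; apply: eq_bigr => i _; rewrite eq_st. Qed.

Lemma hsymB x y s r :
  hsym r.+1 (y :: s) - hsym r.+1 (x :: s) = (y - x) * hsym r (y :: x :: s).
Proof.
elim: r => [|r IHr]; first by rewrite !hsymS !hsym0; ring.
rewrite hsymS [hsym r.+2 (x :: s)]hsymS [hsym r.+1 (y :: x :: s)]hsymS.
have -> : hsym r.+1 (y :: s) = hsym r.+1 (x :: s) + (y - x) * hsym r (y :: x :: s).
  by rewrite -IHr; ring.
ring.
Qed.

Lemma hsym_swap x y s r : hsym r (x :: y :: s) = hsym r (y :: x :: s).
Proof.
elim: r => [|r IHr]; first by rewrite !hsym0.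
rewrite hsymS [hsym r.+1 (y :: x :: s)]hsymS IHr.
have -> : hsym r.+1 (y :: s) = hsym r.+1 (x :: s) + (y - x) * hsym r (y :: x :: s).
  by rewrite -hsymB; ring.
ring.
Qed.

Lemma hsym_rem x t : x \in t -> forall r, hsym r t = hsym r (x :: rem x t).
Proof.
elim: t => [|y t IHt] // xyt r; rewrite [rem _ _]/=.
have [-> //|ne_yx] := eqVneq y x.
have xt : x \in t by move: xyt; rewrite in_cons eq_sym (negbTE ne_yx).
by rewrite (hsym_cons_congr (IHt xt)) hsym_swap.
Qed.

Lemma hsym_perm s t : perm_eq s t -> forall r, hsym r s = hsym r t.
Proof.
elim: s t => [|x s IHs] t pst r; first by rewrite (size0nil (esym (perm_size pst))).
have xt : x \in t by rewrite -(perm_mem pst) mem_head.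
rewrite (hsym_rem xt); apply: hsym_cons_congr => {}r; apply: IHs.
by rewrite -(perm_cons x); apply: perm_trans pst (perm_to_rem xt).
Qed.

Lemma hsym_0cons s r : hsym r (0 :: s) = hsym r s.
Proof.
rewrite hsym_cons big_ord_recl mul1r subn0 big1 ?addr0 // => t _.
by rewrite expr0n mul0r.
Qed.

Lemma hsym_1nseq0 c r : hsym r (1 :: nseq c 0) = 1.
Proof.
have nseq0 r' : hsym r' (nseq c 0) = hsym r' [::].
  by elim: c r' => [|c IHc] r' //; rewrite -[nseq _ _]/(0 :: nseq c 0) hsym_0cons.
by rewrite (hsym_cons_congr nseq0) hsym1s expr1n.
Qed.

Lemma hsym_11nseq0 c r : hsym r (1 :: 1 :: nseq c 0) = r.+1%:R.
Proof.
rewrite hsym_cons (eq_bigr (fun _ => 1)) => [|t _]; last by rewrite expr1n mul1r hsym_1nseq0.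
by rewrite sumr_const card_ord.
Qed.

Definition hsymz (r : int) s : R := if r is Posz n then hsym n s else 0.

Lemma hsymz_perm r s t : perm_eq s t -> hsymz r s = hsymz r t.
Proof. by case: r => //= n /hsym_perm ->. Qed.

Lemma hsymzS x s r : hsymz r (x :: s) = hsymz r s + x * hsymz (r - 1) (x :: s).
Proof.
case: r => [[|n]|n] /=; first by rewrite !hsym0 mulr0 addr0.
  by rewrite subn1 hsymS.
by rewrite mulr0 addr0.
Qed.

Lemma hsymzB_rcons A x y r :
  hsymz r (rcons A y) - hsymz r (rcons A x) = (y - x) * hsymz (r - 1) (rcons (rcons A y) x).
Proof.
have perm_rc z : perm_eq (rcons A z) (z :: A) by rewrite perm_rcons.
have perm_rc2 : perm_eq (rcons (rcons A y) x) (y :: x :: A).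
  by rewrite -!cats1 -catA perm_catC.
rewrite !(hsymz_perm _ (perm_rc _)) (hsymz_perm _ perm_rc2).
case: r => [[|n]|n] /=; first by rewrite !hsym0 subrr mulr0.
  by rewrite subn1 hsymB.
by rewrite subrr mulr0.
Qed.

Lemma hsymzM_eq0 (p q : int) s t : p + q < 0 -> hsymz p s * hsymz q t = 0.
Proof. by case: p => [p|p]; case: q => [q|q] //= _; rewrite ?mulr0 ?mul0r. Qed.

Lemma hsymz_rcons2C r A x y :
  hsymz r (rcons (rcons A x) y) = hsymz r (rcons (rcons A y) x).
Proof.
apply: hsymz_perm; rewrite -!cats1 -!catA perm_cat2l.
by apply/perm_consP; exists 1%N, [:: x].
Qed.

End CompleteHomogeneous.

Section HsymMorphism.
Variables (R S : comNzRingType) (f : {rmorphism R -> S}).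

Lemma hsym_map r s : f (hsym r s) = hsym r (map f s).
Proof.
elim: s r => [|x s IHs] r; first by rewrite !hsym_nil rmorph_nat.
rewrite !hsym_cons rmorph_sum; apply: eq_bigr => t _.
by rewrite rmorphM rmorphXn IHs.
Qed.

Lemma hsymz_map r s : f (hsymz r s) = hsymz r (map f s).
Proof. by case: r => n; rewrite /= ?hsym_map ?rmorph0. Qed.

End HsymMorphism.

Section SwapNth.
Context {R : comNzRingType}.
Implicit Types (s A B : seq R) (x y : R).

Lemma swapNth_cat A B x y : swapNth (A ++ x :: y :: B) (size A) (size A).+1 = A ++ y :: x :: B.
Proof. by elim: A => [|z A IHA] //=; rewrite -IHA. Qed.

Lemma split_at2 s k : (k.+1 < size s)%N ->
  exists A x y B, s = A ++ x :: y :: B /\ size A = k.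
Proof.
move=> hk; exists (take k s), s`_k, s`_k.+1, (drop k.+2 s); split; last first.
  by rewrite size_take_min; lia.
rewrite -{1}(cat_take_drop k s) (drop_nth 0) ?(drop_nth 0 (n := k.+1)) //; exact: ltnW.
Qed.

Lemma perm_swapNth s k : (k.+1 < size s)%N -> perm_eq (swapNth s k k.+1) s.
Proof.
case/split_at2 => A [x [y [B [-> <-]]]].
by rewrite swapNth_cat perm_cat2l -[y :: x :: B]/([:: y] ++ [:: x] ++ B) perm_catCA.
Qed.

End SwapNth.

(** * Closed form of the iterated divided differences *)

Section DividedDifferenceFormula.
Context {R : comNzRingType}.
Implicit Types (s A B : seq R) (x u w : R).

(* Closed form of Phi_{m,k}(s_0, ..., s_k; s_{k+1}, ..., s_{m+1}) when
   Phi(t0, t1) = t0 ^+ i * t1 ^+ j. *)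
Definition ddmon (i j m k : nat) s : R :=
  (-1) ^+ (m + k) *
  (hsymz (j%:Z - m%:Z) (take m.+2 s) * hsymz (i%:Z - k%:Z) (take k.+1 s)
   - hsymz (j%:Z - m%:Z - 1) (take m.+2 s) * hsymz (i%:Z - k%:Z + 1) (take k.+1 s)).

Lemma ddmon00 i j x0 x1 s : ddmon i j 0 0 [:: x0, x1 & s] = x0 ^+ i * x1 ^+ j.
Proof.
rewrite /ddmon /= take0 !addn0 addn1 expr0 mul1r.
have /= -> := hsymzS x0 [:: x1] j.
by rewrite !hsym1s exprS subr0; ring.
Qed.

Lemma take_rcons_cat A C x : take (size A).+1 (A ++ x :: C) = rcons A x.
Proof. by rewrite take_cat ltnNge leqnSn /= subSn // subnn /= take0 cats1. Qed.

Lemma ddmon_swap i j m A B u w : (size A < m)%N ->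
  ddmon i j m (size A) (A ++ w :: u :: B) - ddmon i j m (size A) (A ++ u :: w :: B)
  = (u - w) * ddmon i j m (size A).+1 (A ++ u :: w :: B).
Proof.
move=> Am.
have take_m x y : take m.+2 (A ++ x :: y :: B) = A ++ x :: y :: take (m - size A) B.
  rewrite take_cat ltnNge (_ : size A <= m.+2)%N /=; last by lia.
  by rewrite (_ : m.+2 - size A = (m - size A).+2)%N //; lia.
have perm_m : perm_eq (take m.+2 (A ++ w :: u :: B)) (take m.+2 (A ++ u :: w :: B)).
  by rewrite !take_m perm_cat2l -[w :: u :: _]/([:: w] ++ [:: u] ++ _) perm_catCA.
have take_k2 : take (size A).+2 (A ++ u :: w :: B) = rcons (rcons A u) w.
  by rewrite -cat_rcons -(size_rcons A u) take_rcons_cat.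
rewrite /ddmon !(hsymz_perm _ perm_m) !take_rcons_cat take_k2.
set r := i%:Z - (size A)%:Z.
have -> : i%:Z - (size A).+1%:Z = r - 1 by rewrite /r -addn1 PoszD opprD addrA.
have hw r' : hsymz r' (rcons A w)
    = hsymz r' (rcons A u) + (w - u) * hsymz (r' - 1) (rcons (rcons A u) w).
  by rewrite -hsymz_rcons2C -hsymzB_rcons; ring.
rewrite !hw subrK addrK addnS exprS; ring.
Qed.

Lemma ddmon_last i j m A u w : size A = m.+1 ->
  ddmon i j m 0 (rcons A u) - ddmon i j m 0 (rcons A w)
  = (w - u) * ddmon i j m.+1 0 (rcons (rcons A u) w).
Proof.
move=> sA.
have take1 x : take 1 (rcons A x) = take 1 A by rewrite -cats1 takel_cat // sA.
have take1uw : take 1 (rcons (rcons A u) w) = take 1 A.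
  by rewrite -cats1 takel_cat ?take1 // size_rcons.
have take_all x : take m.+2 (rcons A x) = rcons A x.
  by rewrite take_oversize // size_rcons sA.
have take_alluw : take m.+3 (rcons (rcons A u) w) = rcons (rcons A u) w.
  by rewrite take_oversize // !size_rcons sA.
rewrite /ddmon !take1 take1uw !take_all take_alluw.
set r := j%:Z - m%:Z.
have -> : j%:Z - m.+1%:Z = r - 1 by rewrite /r -addn1 PoszD opprD addrA.
have hu r' : hsymz r' (rcons A u)
    = hsymz r' (rcons A w) + (u - w) * hsymz (r' - 1) (rcons (rcons A u) w).
  by rewrite -hsymzB_rcons; ring.
by rewrite !hu !addn0 exprS; ring.
Qed.

End DividedDifferenceFormula.

Section DividedDifferencePhi.
Context {R : comNzRingType}.
Variables (d : nat) (a : nat -> nat -> R).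
Implicit Types (s t u : seq R).

Definition ddPhi (m k : nat) s : R :=
  \sum_(i < d.+1) \sum_(j < d.+1) a i j * ddmon i j m k s.

Lemma Phi0_ddPhi x0 x1 s : Phi0 d a x0 x1 = ddPhi 0 0 [:: x0, x1 & s].
Proof. by apply: eq_bigr => i _; apply: eq_bigr => j _; rewrite ddmon00 mulrA. Qed.

Lemma ddPhiB m k m' k' s t u c :
  (forall i j, ddmon i j m k s - ddmon i j m k t = c * ddmon i j m' k' u) ->
  ddPhi m k s - ddPhi m k t = c * ddPhi m' k' u.
Proof.
move=> eq_ij; rewrite /ddPhi -sumrB mulr_sumr; apply: eq_bigr => i _.
rewrite -sumrB mulr_sumr; apply: eq_bigr => j _.
by rewrite -mulrBr eq_ij mulrCA.
Qed.

Lemma ddPhi_take m k s : (k <= m.+1)%N -> ddPhi m k s = ddPhi m k (take m.+2 s).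
Proof.
move=> km; apply: eq_bigr => i _; apply: eq_bigr => j _.
by rewrite /ddmon take_taker // take_takel.
Qed.

Lemma ddPhi_last m s : (m.+3 <= size s)%N ->
  ddPhi m 0 (take m.+2 s) - ddPhi m 0 (rcons (take m.+1 s) s`_m.+2)
  = (s`_m.+2 - s`_m.+1) * ddPhi m.+1 0 s.
Proof.
move=> hs; rewrite [ddPhi m.+1 0 s]ddPhi_take // (take_nth 0 (n := m.+2)) //.
rewrite (take_nth 0 (n := m.+1)); last exact: ltnW.
by apply: ddPhiB => i j; apply: ddmon_last; rewrite size_takel // (ltnW (ltnW hs)).
Qed.

Lemma ddPhi_swap m k s : (k.+1 < size s)%N -> (k < m)%N ->
  ddPhi m k (swapNth s k k.+1) - ddPhi m k s = (s`_k - s`_k.+1) * ddPhi m k.+1 s.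
Proof.
case/split_at2 => A [x [y [B [-> <-]]]] Am.
rewrite swapNth_cat !nth_cat ltnn subnn ltnNge leqnSn subSn //= subnn /=.
by apply: ddPhiB => i j; apply: ddmon_swap.
Qed.

End DividedDifferencePhi.

Section DividedDifferenceMorphism.
Variables (R S : comNzRingType) (f : {rmorphism R -> S}).

Lemma ddmon_map i j m k s : f (ddmon i j m k s) = ddmon i j m k (map f s).
Proof. by rewrite rmorphM rmorphXn rmorphN1 rmorphB !rmorphM !hsymz_map !map_take. Qed.

Lemma ddPhi_map d a m k s :
  f (ddPhi d a m k s) = ddPhi d (fun i j => f (a i j)) m k (map f s).
Proof.
rewrite rmorph_sum; apply: eq_bigr => i _; rewrite rmorph_sum; apply: eq_bigr => j _.
by rewrite rmorphM ddmon_map.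
Qed.

End DividedDifferenceMorphism.

Lemma eq_ddPhi {R : comNzRingType} d (a a' : nat -> nat -> R) m k s t :
  (forall i j, (i <= d)%N -> (j <= d)%N -> a i j = a' i j) ->
  perm_eq (take m.+2 s) (take m.+2 t) -> take k.+1 s = take k.+1 t ->
  ddPhi d a m k s = ddPhi d a' m k t.
Proof.
move=> eq_a perm_st eq_st; apply: eq_bigr => i _; apply: eq_bigr => j _.
by rewrite /ddmon eq_st !(hsymz_perm _ perm_st) eq_a // -ltnS.
Qed.

(* The value is (-1)^(m+k) if k = 0 and (-1)^(m+k) (m + 1 - k) otherwise. *)
Lemma ddmon_11_neq0 (R : numDomainType) d m k : (m < d)%N -> (k <= m)%N ->
  ddmon d d m k (1 :: 1 :: nseq m (0 : R)) != 0.
Proof.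
move=> md km; rewrite /ddmon take_oversize /= ?size_nseq //.
have -> : d%:Z - m%:Z = (d - m)%N by lia.
have -> : (d - m)%N%:Z - 1 = (d - m - 1)%N by lia.
have -> : d%:Z - k%:Z = (d - k)%N by lia.
have -> : (d - k)%N%:Z + 1 = (d - k).+1 by lia.
rewrite /= mulf_eq0 signr_eq0 /= !hsym_11nseq0.
case: k km => [|k] km /=.
  rewrite -[[:: 1]]/(1 :: nseq 0 (0 : R)) !hsym_1nseq0 !mulr1.
  by rewrite -natrB ?pnatr_eq0 ?subn_eq0 -?ltnNge; lia.
rewrite take_nseq ?(ltnW km) // !hsym_11nseq0 -!natrM.
by rewrite -natrB ?pnatr_eq0 ?subn_eq0 -?ltnNge; nia.
Qed.

Lemma exdivE {R : idomainType} (p q r : R) : q != 0 -> p = q * r -> exdiv p q = r.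
Proof.
move=> nz_q def_p; apply: (mulfI nz_q); rewrite -def_p; symmetry.
exact: (ClassicalEpsilon.epsilon_spec (inhabits 0) (fun r => p = q * r) (ex_intro _ r def_p)).
Qed.

Lemma eq0_subr_mul {R : idomainType} (x y c z : R) :
  c != 0 -> x - y = c * z -> x = 0 -> y = 0 -> z = 0.
Proof.
move=> nz_c + x0 y0; rewrite x0 y0 subrr => /esym/eqP.
by rewrite mulf_eq0 (negbTE nz_c) => /eqP.
Qed.

Lemma uniq_rcons_take (T : eqType) (x0 : T) s m : uniq s -> (m.+2 < size s)%N ->
  uniq (rcons (take m.+1 s) (nth x0 s m.+2)).
Proof.
move=> us hs; have := take_uniq m.+3 us.
rewrite (take_nth x0) // (take_nth x0) ?(ltn_trans _ hs) //.
by rewrite !rcons_uniq mem_rcons in_cons negb_or => /and3P[/andP[_ ->] _ ->].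
Qed.

Section ClosedForm.
Context {R : idomainType}.
Variables (d : nat) (a : nat -> nat -> R).
Implicit Types (s : seq R).

Lemma PhiL_ddPhi m s : uniq s -> (m.+2 <= size s)%N -> PhiL d a m s = ddPhi d a m 0 s.
Proof.
elim: m s => [|m IHm] s us hs.
  by case: s us hs => [|x0 [|x1 s]] //= _ _; apply: Phi0_ddPhi.
have hm1 : (m.+1 < size s)%N by apply: ltn_trans hs.
rewrite [PhiL _ _ _ _]/= IHm ?take_uniq ?size_takel // ?(ltnW hm1) //.
rewrite IHm ?uniq_rcons_take ?size_rcons ?size_takel // ?(ltnW hm1) //.
apply: exdivE; last exact: ddPhi_last.
by rewrite subr_eq0 nth_uniq //; lia.
Qed.

Lemma PhiLk_ddPhi m k s : uniq s -> (m.+2 <= size s)%N -> (k <= m)%N ->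
  PhiLk d a m k s = ddPhi d a m k s.
Proof.
elim: k s => [|k IHk] s us hs km; first exact: PhiL_ddPhi.
have hk : (k.+1 < size s)%N by apply: leq_trans hs; lia.
have perm_s := perm_swapNth hk.
rewrite [PhiLk _ _ _ _ _]/= !IHk ?(perm_uniq perm_s) ?(perm_size perm_s) ?(ltnW km) //.
apply: exdivE; last exact: ddPhi_swap.
by rewrite subr_eq0 nth_uniq // ?(ltnW hk) //; lia.
Qed.

End ClosedForm.

Section Vanishing.
Context {R : comNzRingType} {K : idomainType} (f : {rmorphism R -> K}).
Variables (d : nat) (a : nat -> nat -> R) (Q : seq R).
Hypothesis Phi0_Q : {in Q &, forall x y, x != y -> f (Phi0 d a x y) = 0}.
Hypothesis f_injQ : {in Q &, injective f}.

Lemma nth_subr_neq0 s i j : uniq s -> {subset s <= Q} -> (i < size s)%N -> (j < size s)%N ->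
  i != j -> f s`_i - f s`_j != 0.
Proof.
move=> us sQ hi hj ne_ij; rewrite subr_eq0; apply: contra ne_ij => /eqP fij.
by rewrite -(nth_uniq 0 hi hj us); apply/eqP/f_injQ => //; apply: sQ; rewrite mem_nth.
Qed.

Lemma ddPhi0_vanish m s : uniq s -> {subset s <= Q} -> (m.+2 <= size s)%N ->
  f (ddPhi d a m 0 s) = 0.
Proof.
elim: m s => [|m IHm] s us sQ hs.
  case: s us sQ hs => [|x0 [|x1 s]] // /andP[x0_notin _] sQ _.
  have ne01 : x0 != x1 by apply/eqP => e01; rewrite e01 mem_head in x0_notin.
  by rewrite -Phi0_ddPhi Phi0_Q // sQ // !inE eqxx ?orbT.
have hm1 : (m.+1 < size s)%N by apply: ltn_trans hs.
have E := congr1 f (ddPhi_last d a hs); rewrite rmorphM !rmorphB in E.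
apply: (eq0_subr_mul (nth_subr_neq0 us sQ hs hm1 (negbT (gtn_eqF (ltnSn _)))) E).
- apply: IHm; rewrite ?take_uniq ?size_takel // ?(ltnW hm1) //.
  by move=> x /mem_take /sQ.
- apply: IHm; rewrite ?uniq_rcons_take ?size_rcons ?size_takel // ?(ltnW hm1) //.
  by move=> x; rewrite mem_rcons in_cons => /orP[/eqP -> | /mem_take]; apply: sQ;
    rewrite ?mem_nth.
Qed.

Lemma ddPhi_vanish m k s : uniq s -> {subset s <= Q} -> (m.+2 <= size s)%N -> (k <= m)%N ->
  f (ddPhi d a m k s) = 0.
Proof.
elim: k s => [|k IHk] s us sQ hs km; first exact: ddPhi0_vanish.
have hk : (k.+1 < size s)%N by apply: leq_trans hs; lia.
have perm_s := perm_swapNth hk.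
have E := congr1 f (ddPhi_swap d a hk km); rewrite rmorphM !rmorphB in E.
apply: (eq0_subr_mul (nth_subr_neq0 us sQ (ltnW hk) hk (negbT (ltn_eqF (ltnSn _)))) E).
- apply: IHk; rewrite ?(perm_uniq perm_s) ?(perm_size perm_s) ?(ltnW km) //.
  by move=> x; rewrite (perm_mem perm_s) => /sQ.
- exact: IHk (ltnW km).
Qed.

End Vanishing.

(** * Variables of the polynomial rings *)

Lemma XnE N t (ltN : (t < N)%N) : Xn N t = 'X_(Ordinal ltN).
Proof. by rewrite /Xn insubT. Qed.

Lemma Xn_inj N t t' : (t < N)%N -> (t' < N)%N -> Xn N t = Xn N t' -> t = t'.
Proof.
move=> ltN ltN'; rewrite (XnE ltN) (XnE ltN') => /(congr1 (mcoeff U_(Ordinal ltN))).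
rewrite !mcoeffXU eqxx; case: eqP => [[] //|_] /eqP; by rewrite oner_eq0.
Qed.

Lemma triIdx_lt d i j : (i <= d)%N -> (j <= d)%N -> (triIdx i j < mA d)%N.
Proof. by rewrite /triIdx /mA -!divn2; nia. Qed.

Lemma triIdx_eq_max d (i j : 'I_d.+1) :
  (triIdx i j == triIdx d d) = (i == ord_max) && (j == ord_max).
Proof.
rewrite -!val_eqE /= /triIdx maxnn minnn.
have binE x : (x * x.+1)./2 = 'C(x.+1, 2) by rewrite bin2 mulnC.
have := ltn_ord i; have := ltn_ord j; rewrite !ltnS !binE => jd id.
have [lt_Md|ge_Md] := ltnP (maxn i j) d.
  have : ('C((maxn i j).+1, 2) + (maxn i j).+1 <= 'C(d.+1, 2))%N.
    by rewrite -[X in (_ + X <= _)%N]bin1 -binS leq_bin2l.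
  by move=> le_C; apply/eqP/andP; lia.
have -> : maxn i j = d by apply/eqP; rewrite eqn_leq geq_max id jd.
by apply/eqP/andP; lia.
Qed.

Lemma xvar_inj d n : injective (xvar d n).
Proof.
move=> u w /Xn_inj; rewrite !ltn_add2l => /(_ (ltn_ord u) (ltn_ord w)).
by move/addnI/val_inj.
Qed.

(** * Vanishing on U(H) *)

Lemma vanI_zclosure N (S : point N -> Prop) p : vanI S p -> vanI (zclosure S) p.
Proof. by move=> Sp z; apply. Qed.

Lemma PhiLk_clique_vanI n d l (e : rel 'I_n) (v : 'I_l.+1 -> 'I_n) k :
  (1 <= l)%N -> injective v -> (forall i j, i != j -> e (v i) (v j)) -> (k <= l.-1)%N ->
  vanI (Uset d n e) (PhiLk d (avar d n) l.-1 k [seq xvar d n (v i) | i <- enum 'I_l.+1]).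
Proof.
move=> l_gt0 inj_v clique_v kl; apply: vanI_zclosure => z [Wz notZz].
set s := [seq xvar d n (v i) | i <- enum 'I_l.+1].
have us : uniq s by rewrite map_inj_uniq ?enum_uniq // => i j /xvar_inj /inj_v.
have size_s : (l.-1.+2 <= size s)%N by rewrite size_map size_enum_ord; lia.
rewrite PhiLk_ddPhi //; apply: (@ddPhi_vanish _ _ (meval z) d (avar d n) s) => //.
  move=> _ _ /mapP[i _ ->] /mapP[j _ ->] ne_ij; apply: Wz; apply: clique_v.
  by apply: contraNneq ne_ij => ->.
move=> _ _ /mapP[i _ ->] /mapP[j _ ->] eq_ij.
have [lt_ij|lt_ji|/val_inj -> //] := ltngtP (v i) (v j); case: notZz; split => //.
  by exists (v j), (v i); rewrite mevalB eq_ij subrr.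
by exists (v i), (v j); rewrite mevalB eq_ij subrr.
Qed.

(** * Symmetry in the last variables *)

Lemma gvarsE d l :
  [seq gvar d l i | i <- iota 0 l.+1] = [seq gvar d l i | i : 'I_l.+1 <- enum 'I_l.+1].
Proof. by rewrite -val_enum_ord -map_comp. Qed.

Lemma uniq_gvars d l : uniq [seq gvar d l i | i <- iota 0 l.+1].
Proof.
rewrite map_inj_in_uniq ?iota_uniq // => i j; rewrite !mem_iota !add0n => hi hj.
by move/Xn_inj; rewrite !ltn_add2l => /(_ hi hj) /addnI.
Qed.

Lemma PhiGenE d l k : (1 <= l)%N -> (k <= l.-1)%N ->
  PhiGen d l k = ddPhi d (fun i j => Xn (mA d + l.+1) (triIdx i j)) l.-1 k
                   [seq gvar d l i | i <- iota 0 l.+1].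
Proof.
move=> l_gt0 kl; rewrite /PhiGen PhiLk_ddPhi ?uniq_gvars //.
by rewrite size_map size_iota; lia.
Qed.

Lemma renameX_Xn d l (sigma : 'S_l.+1) t (ltN : (t < mA d + l.+1)%N) :
  comp_mpoly (renameX d l sigma) (Xn (mA d + l.+1) t)
  = if (t < mA d)%N then Xn (mA d + l.+1) t else gvar d l (sigma (inord (t - mA d))).
Proof. by rewrite [in LHS](XnE ltN) comp_mpolyXU -tnth_nth tnth_mktuple. Qed.

Lemma renameX_gvar d l (sigma : 'S_l.+1) (i : 'I_l.+1) :
  comp_mpoly (renameX d l sigma) (gvar d l i) = gvar d l (sigma i).
Proof.
by rewrite /gvar renameX_Xn ?ltn_add2l // ltnNge leq_addr /= addKn inord_val.
Qed.

Lemma perm_map_perm (T : finType) (sigma : {perm T}) : perm_eq (map sigma (enum T)) (enum T).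
Proof.
apply: uniq_perm; [by rewrite map_inj_uniq ?enum_uniq //; apply: perm_inj | exact: enum_uniq |].
by move=> x; rewrite mem_enum; apply/mapP; exists ((sigma^-1)%g x); rewrite ?mem_enum ?permKV.
Qed.

Lemma PhiGen_sym d l k (sigma : 'S_l.+1) : (1 <= l)%N -> (k <= l.-1)%N ->
  (forall i : 'I_l.+1, (i <= k)%N -> sigma i = i) ->
  comp_mpoly (renameX d l sigma) (PhiGen d l k) = PhiGen d l k.
Proof.
move=> l_gt0 kl fix_sigma; rewrite PhiGenE // ddPhi_map -map_comp.
apply: eq_ddPhi => [i j id jd | | ].
- rewrite /= renameX_Xn ?triIdx_lt //.
  exact: leq_trans (triIdx_lt id jd) (leq_addr _ _).
- rewrite !take_oversize ?size_map ?size_iota; try lia.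
  rewrite map_comp gvarsE -map_comp (eq_map (renameX_gvar d sigma)).
  rewrite (map_comp (fun i : 'I_l.+1 => gvar d l i) sigma).
  exact: perm_map (perm_map_perm sigma).
- rewrite -!map_take take_iota; apply/eq_in_map => i.
  rewrite mem_iota add0n leq_min ltnS => /andP[_ /andP[ik il]] /=.
  by rewrite -(inordK il) renameX_gvar fix_sigma // inordK.
Qed.

(** * Degree in the x-variables *)

Section PartialDegree.
Variables (n : nat) (A : pred 'I_n).

Definition mdeg_on (m : 'X_{1..n}) : nat := (\sum_(i < n | A i) m i)%N.

Lemma mdeg_on0 : mdeg_on 0%MM = 0%N.
Proof. by rewrite /mdeg_on big1 // => i _; rewrite mnm0E. Qed.

Lemma mdeg_onD : {morph mdeg_on : m1 m2 / (m1 + m2)%MM >-> (m1 + m2)%N}.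
Proof.
by move=> m1 m2; rewrite /mdeg_on -big_split; apply: eq_bigr => i _; rewrite mnmDE.
Qed.

Lemma mdeg_onU i : mdeg_on U_(i) = A i.
Proof.
rewrite /mdeg_on; case: (boolP (A i)) => Ai.
  rewrite (bigD1 i) //= mnm1E eqxx big1 ?addn0 // => t /andP[_ ne_ti].
  by rewrite mnm1E eq_sym (negbTE ne_ti).
by rewrite big1 // => t At; rewrite mnm1E; case: eqP At => // <-; rewrite (negbTE Ai).
Qed.

Lemma mdeg_on_eq0 m i : mdeg_on m = 0%N -> A i -> m i = 0%N.
Proof. by move=> + Ai; rewrite /mdeg_on (bigD1 i) //=; lia. Qed.

End PartialDegree.

HB.instance Definition _ n A := isMeasure.Build n (mdeg_on A) (mdeg_on0 A) (mdeg_onD A).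

Lemma dhomog_mdeg_onX n (R : nzRingType) (A : pred 'I_n) (t : 'I_n) :
  ('X_t : {mpoly R[n]}) \is (A t : nat).-homog for (mdeg_on A).
Proof. by rewrite dhomogX /= mdeg_onU. Qed.

Section HomogeneousHsym.
Variables (n : nat) (R : comNzRingType) (mf : measure n) (c : nat).
Implicit Types (s t : seq {mpoly R[n]}).

Lemma dhomog_hsym s r :
  {in s, forall x, x \is c.-homog for mf} -> hsym r s \is (c * r).-homog for mf.
Proof.
elim: s r => [|x s IHs] r hs.
  by rewrite hsym_nil; case: r => [|r]; rewrite ?muln0 ?dhomog1 ?dhomog0.
rewrite hsym_cons; apply: rpred_sum => t _.
have -> : (c * r = c * t + c * (r - t))%N by rewrite -mulnDr subnKC // -ltnS.
apply: dhomogM; first by apply: dhomogMn; apply: hs; rewrite mem_head.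
by apply: IHs => y ys; apply: hs; rewrite in_cons ys orbT.
Qed.

Lemma dhomog_hsymzM s t (p q : int) (D : nat) :
  {in s, forall x, x \is c.-homog for mf} -> {in t, forall x, x \is c.-homog for mf} ->
  p + q = D%:Z -> hsymz p s * hsymz q t \is (c * D).-homog for mf.
Proof.
move=> hs ht; case: p => [p|p]; case: q => [q|q] /=; rewrite ?mulr0 ?mul0r ?dhomog0 //.
by rewrite -PoszD => -[<-]; rewrite mulnDr; apply: dhomogM; apply: dhomog_hsym.
Qed.

End HomogeneousHsym.

Lemma ddmon_dhomog n (R : comNzRingType) (mf : measure n) c i j m k
    (s : seq {mpoly R[n]}) :
  {in s, forall x, x \is c.-homog for mf} ->
  ddmon i j m k s \is (c * (j + i - m - k)).-homog for mf.
Proof.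
move=> hs; have hs_take p : {in take p s, forall x, x \is c.-homog for mf}.
  by move=> x /mem_take /hs.
rewrite /ddmon -[(c * _)%N]add0n; apply: dhomogM.
  by rewrite -signr_odd; case: odd; rewrite ?expr1 ?expr0 ?dhomogN dhomog1.
have [neg|nonneg] := ltrP ((j%:Z - m%:Z) + (i%:Z - k%:Z)) 0.
  by rewrite !hsymzM_eq0 ?subrr ?dhomog0 //; lia.
by apply: dhomogD; rewrite ?dhomogN; apply: dhomog_hsymzM (hs_take _) (hs_take _) _; lia.
Qed.

Lemma mmeasure_dhomog_le n (R : nzRingType) (mf : measure n) D (p : {mpoly R[n]}) :
  p \is D.-homog for mf -> (mmeasure mf p <= D.+1)%N.
Proof. by move=> /dhomogP hp; rewrite mmeasureE; apply/bigmax_leqP_seq => mo /hp ->. Qed.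

Lemma mcoeffMXU n (R : comNzRingType) (t tau : 'I_n) (q : {mpoly R[n]}) (mu : 'X_{1..n}) :
  {in msupp q, forall mo : 'X_{1..n}, mo tau = 0%N} ->
  (q * 'X_t)@_(U_(tau) + mu) = if t == tau then q@_mu else 0.
Proof.
move=> q_tau; have [<-|ne_t] := eqVneq t tau; first exact: mcoeffMX.
apply: memN_msupp_eq0; rewrite (perm_mem (msuppMX _ _)).
apply/mapP => -[mo /q_tau mo_tau /(congr1 (fun mo : 'X_{1..n} => mo tau))].
by rewrite !mnmDE !mnm1E eqxx (negbTE ne_t) mo_tau.
Qed.

Lemma sum_if_ord_max2 (V : nmodType) n (c : V) :
  \sum_(i < n.+1) \sum_(j < n.+1) (if (i == ord_max) && (j == ord_max) then c else 0) = c.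
Proof.
have sum_max (F : 'I_n.+1 -> V) : \sum_i (if i == ord_max then F i else 0) = F ord_max.
  by rewrite -big_mkcond big_pred1_eq.
rewrite -[RHS](sum_max (fun _ => c)); apply: eq_bigr => i _.
by case: (i == ord_max); rewrite ?sum_max ?big1.
Qed.

Section PhiGenDegree.
Variables (d l k : nat).
Hypotheses (l_gt0 : (1 <= l)%N) (ld : (l <= d)%N) (kl : (k <= l.-1)%N).
Local Notation N := (mA d + l.+1).
Local Notation G := [seq gvar d l i | i <- iota 0 l.+1].
Local Notation avars := (fun i j => Xn N (triIdx i j)).
Local Notation xmeasure := (mdeg_on (fun t : 'I_N => (mA d <= t)%N)).
Local Notation ameasure := (mdeg_on (fun t : 'I_N => (t < mA d)%N)).

Lemma triIdx_ltN i j : (i <= d)%N -> (j <= d)%N -> (triIdx i j < N)%N.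
Proof. by move=> id jd; apply: leq_trans (triIdx_lt id jd) (leq_addr _ _). Qed.

Lemma Xn_dhomog (A : pred 'I_N) t (ltN : (t < N)%N) :
  Xn N t \is (A (Ordinal ltN) : nat).-homog for (mdeg_on A).
Proof. by rewrite (XnE ltN) dhomog_mdeg_onX. Qed.

Lemma dhomog_gvars (A : pred 'I_N) (c : bool) :
  (forall t : 'I_N, (mA d <= t)%N -> A t = c) ->
  {in G, forall x, x \is c.-homog for (mdeg_on A)}.
Proof.
move=> Ac x; case/mapP => i; rewrite mem_iota add0n => il ->.
have ltN : (mA d + i < N)%N by rewrite ltn_add2l.
by rewrite /gvar -(Ac (Ordinal ltN)) ?leq_addr // Xn_dhomog.
Qed.

Lemma ddmon_xdhomog i j : ddmon i j l.-1 k G \is (j + i - l.-1 - k).-homog for xmeasure.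
Proof.
rewrite -[(j + i - _ - _)%N]mul1n; apply: ddmon_dhomog.
by apply: (dhomog_gvars (c := true)) => t ->.
Qed.

Lemma ddmon_adhomog i j : ddmon i j l.-1 k G \is 0.-homog for ameasure.
Proof.
have := ddmon_dhomog i j l.-1 k
  (dhomog_gvars (c := false) (A := fun t : 'I_N => (t < mA d)%N) _).
by rewrite mul0n; apply => t; rewrite ltnNge => ->.
Qed.

Lemma avar_xdhomog i j : (i <= d)%N -> (j <= d)%N -> avars i j \is 0.-homog for xmeasure.
Proof.
move=> id jd; have := Xn_dhomog (fun t : 'I_N => (mA d <= t)%N) (triIdx_ltN id jd).
by rewrite /= leqNgt triIdx_lt.
Qed.

Lemma mmeasure_PhiGen_le :
  (mmeasure xmeasure (ddPhi d avars l.-1 k G) <= (2 * d + 1 - l - k).+1)%N.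
Proof.
apply: (leq_trans (mmeasure_sum _ _ _ _)); apply/bigmax_leqP => i _.
apply: (leq_trans (mmeasure_sum _ _ _ _)); apply/bigmax_leqP => j _.
have ij_homog := dhomogM (avar_xdhomog (ltn_ord i) (ltn_ord j)) (ddmon_xdhomog i j).
apply: (leq_trans (mmeasure_dhomog_le ij_homog)).
by rewrite add0n; have := ltn_ord i; have := ltn_ord j; lia.
Qed.

Lemma ddmon_top_neq0 : ddmon d d l.-1 k G != 0.
Proof.
pose z (t : 'I_N) : CC := ((mA d <= t < mA d + 2)%N : nat)%:R.
have zG : map (meval z) G = 1 :: 1 :: nseq l.-1 0.
  have zg i : (i < l.+1)%N -> meval z (gvar d l i) = (i < 2)%:R.
    move=> il; have ltN : (mA d + i < N)%N by rewrite ltn_add2l.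
    by rewrite /gvar (XnE ltN) mevalXU /z /= leq_addr ltn_add2l.
  have -> : iota 0 l.+1 = [:: 0, 1 & iota 2 l.-1] by rewrite -(prednK l_gt0).
  rewrite /= !zg //; try lia; congr [:: _, _ & _].
  have -> : nseq l.-1 (0 : CC) = map (fun=> 0) (iota 2 l.-1).
    by rewrite -{1}(size_iota 2 l.-1); elim: (iota _ _) => //= x s ->.
  rewrite -map_comp; apply/eq_in_map => i.
  rewrite mem_iota => /andP[le2i ltil] /=.
  by rewrite zg; [rewrite ltnNge le2i | lia].
have lt_ld : (l.-1 < d)%N by lia.
have := ddmon_11_neq0 CC lt_ld kl; rewrite -zG -ddmon_map.
by apply: contraNneq => ->; rewrite rmorph0.
Qed.

(* The ddmon involve only x-variables and a_ij = a_dd forces i = j = d, so only the a_dd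
   term contributes. *)
Lemma mcoeff_PhiGen_top (mu : 'X_{1..N}) (ltN : (triIdx d d < N)%N) :
  (ddPhi d avars l.-1 k G)@_(U_(Ordinal ltN) + mu) = (ddmon d d l.-1 k G)@_mu.
Proof.
have tau0 i j : {in msupp (ddmon i j l.-1 k G), forall mo : 'X_{1..N}, mo (Ordinal ltN) = 0%N}.
  by move=> mo /(dhomog_mf (ddmon_adhomog i j)) /mdeg_on_eq0; apply; apply: triIdx_lt.
have term (i j : 'I_d.+1) : (avars i j * ddmon i j l.-1 k G)@_(U_(Ordinal ltN) + mu)
    = if (i == ord_max) && (j == ord_max) then (ddmon d d l.-1 k G)@_mu else 0.
  have ltij := triIdx_ltN (ltn_ord i) (ltn_ord j).
  rewrite [avars i j](XnE ltij) mulrC mcoeffMXU //.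
  rewrite -val_eqE triIdx_eq_max.
  (* Rewriting rather than conversion: unfolding the polynomials would be far too slow. *)
  have val_max : nat_of_ord (@ord_max d) = d by [].
  by case: andP => [[/eqP -> /eqP ->]|_]; rewrite ?val_max.
rewrite /ddPhi raddf_sum -[RHS](sum_if_ord_max2 d).
by apply: eq_bigr => i _; rewrite raddf_sum; apply: eq_bigr => j _; apply: term.
Qed.

Lemma xdeg_PhiGen_ddPhi :
  xdeg d l (ddPhi d avars l.-1 k G) = (2 * d + 1 - l - k)%N.
Proof.
set p := ddPhi _ _ _ _ _; set mu := mlead (ddmon d d l.-1 k G).
have mu_in : mu \in msupp (ddmon d d l.-1 k G) by apply: mlead_supp; apply: ddmon_top_neq0.
have ltN := triIdx_ltN (leqnn d) (leqnn d).
have mo_in : (U_(Ordinal ltN) + mu)%MM \in msupp p.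
  by rewrite mcoeff_msupp mcoeff_PhiGen_top -mcoeff_msupp.
have x_mo : xmeasure (U_(Ordinal ltN) + mu)%MM = (2 * d + 1 - l - k)%N.
  rewrite mdeg_onD mdeg_onU (dhomog_mf (ddmon_xdhomog d d) mu_in) /= leqNgt triIdx_lt //.
  lia.
apply/eqP; rewrite eqn_leq; apply/andP; split.
  apply/bigmax_leqP_seq => mo mo_in' _.
  by have := leq_trans (mmeasure_mnm_lt xmeasure mo_in') mmeasure_PhiGen_le.
by rewrite -x_mo; exact: (@leq_bigmax_seq _ _ xpredT xmeasure _ mo_in isT).
Qed.

End PhiGenDegree.

Lemma xdeg_PhiGen d l k : (1 <= l <= d)%N -> (k <= l.-1)%N ->
  xdeg d l (PhiGen d l k) = (2 * d + 1 - l - k)%N.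
Proof. by move=> /andP[l_gt0 ld] kl; rewrite PhiGenE //; apply: xdeg_PhiGen_ddPhi. Qed.

Theorem mainTheorem11 (n d l : nat) (e : rel 'I_n) (v : 'I_l.+1 -> 'I_n) :
  simple_graph e -> connected_graph e -> regular_graph e d ->
  (1 <= l <= d)%N ->
  injective v -> (forall i j, i != j -> e (v i) (v j)) ->
  forall k : nat, (k <= l.-1)%N ->
    [/\ vanI (Uset d n e)
          (PhiLk d (avar d n) l.-1 k [seq xvar d n (v i) | i <- enum 'I_l.+1]),
        (forall sigma : 'S_l.+1, (forall i : 'I_l.+1, (i <= k)%N -> sigma i = i) ->
           comp_mpoly (renameX d l sigma) (PhiGen d l k) = PhiGen d l k)
      & xdeg d l (PhiGen d l k) = (2 * d + 1 - l - k)%N].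
Proof.
move=> _ _ _ hld inj_v clique_v k kl; have /andP[l_gt0 _] := hld.
split; first exact: PhiLk_clique_vanI.
  by move=> sigma; apply: PhiGen_sym.
exact: xdeg_PhiGen.
Qed.
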